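(* Let $c\ge1$ be an integer and $\mathcal{P}$ a $c$-indistinguishable finite bias distribution. Then for every $1\le\ell\le c$, $\mathcal{R}_{\ell,\mathcal{P}}=E_p\bigl[\sqrt{p(1-p)}\bigr]>0$.
   Context: A finite bias distribution is a probability distribution $\mathcal{P}$ supported on a finite subset of $(0,1)$ that is symmetric: it outputs $a$ and $1-a$ with the same probability. $E_p$ is expectation over $p\sim\mathcal{P}$. $\sigma(p)=\sqrt{(1-p)/p}$; for integers $\ell\ge1$, $0\le x\le\ell$, $f_{\ell,x}(p)=p^x(1-p)^{\ell-x}(x\sigma(p)-(\ell-x)\sigma(1-p))$, $R_{\ell,x}=\max\{0,E_p[f_{\ell,x}(p)]\}$, and $\mathcal{R}_{\ell,\mathcal{P}}=E_p[-f_{\ell,0}(p)]-\sum_{x=1}^{\ell-1}\binom{\ell}{x}R_{\ell,x}$. $\mathcal{P}$ is $c$-indistinguishable if $\sum_{x=1}^{\ell-1}\binom{\ell}{x}R_{\ell,x}=0$ for all $2\le\ell\le c$. *)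

From HB Require Import structures.
From mathcomp Require Import all_boot all_order all_algebra.
From mathcomp Require Import reals.
Set Implicit Arguments. Unset Strict Implicit. Unset Printing Implicit Defensive.
Import Order.TTheory GRing.Theory Num.Theory.
Local Open Scope ring_scope.

Record bias_dist (R : realType) := BiasDist {
  supp : seq R;
  wt : R -> R;
  supp_uniq : uniq supp;
  supp_in01 : forall a, a \in supp -> 0 < a < 1;
  wt_pos : forall a, a \in supp -> 0 < wt a;
  wt_sum1 : \sum_(a <- supp) wt a = 1;
  supp_sym : forall a, a \in supp -> (1 - a) \in supp;
  wt_sym : forall a, a \in supp -> wt (1 - a) = wt a
}.

Section Defs.
Variable R : realType.

Definition Ep (P : bias_dist R) (g : R -> R) : R :=
  \sum_(a <- supp P) wt P a * g a.

Definition sigma (p : R) : R := Num.sqrt ((1 - p) / p).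

Definition fLx (l x : nat) (p : R) : R :=
  p ^+ x * (1 - p) ^+ (l - x) *
  (x%:R * sigma p - (l - x)%:R * sigma (1 - p)).

Definition RLx (P : bias_dist R) (l x : nat) : R :=
  Num.max 0 (Ep P (fLx l x)).

Definition calR (l : nat) (P : bias_dist R) : R :=
  Ep P (fun p => - fLx l 0 p) - \sum_(1 <= x < l) 'C(l, x)%:R * RLx P l x.

Definition indistinguishable (c : nat) (P : bias_dist R) : Prop :=
  forall l : nat, (2 <= l <= c)%N ->
    \sum_(1 <= x < l) 'C(l, x)%:R * RLx P l x = 0.
End Defs.

From HB Require Import structures.
From mathcomp Require Import all_boot all_order all_algebra.
From mathcomp Require Import reals.
From mathcomp Require Import ring lra.
Import Order.TTheory GRing.Theory Num.Theory.
Local Open Scope ring_scope.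

(* Indistinguishability forces E[f_{l,x}] <= 0 for 0 < x < l, while the
   symmetry p |-> 1 - p of the distribution gives E[f_{l,l-x}] = -E[f_{l,x}];
   hence all these expectations vanish.  With s(p) = sqrt(p(1-p)) one has
   p sigma(p) = (1-p) sigma(1-p) = s(p), so that, for the Bernstein polynomials
   b_{n,k}, binom(n+1,k+1) f_{n+1,k+1} = (n+1) s (b_{n,k} - b_{n,k+1}).  Thus
   E[s b_{n,k}] does not depend on k, and since the b_{n,k} sum to 1,
   E[s] = (n+1) E[s b_{n,0}] = E[-f_{n+1,0}] = R_{n+1,P}. *)

Section Pointwise.
Variable R : realType.
Implicit Types (p : R) (n k l x : nat).

Definition sd p : R := Num.sqrt (p * (1 - p)).

Definition bern n k p : R := 'C(n, k)%:R * p ^+ k * (1 - p) ^+ (n - k).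

Lemma sum_bern n p : \sum_(k < n.+1) bern n k p = 1.
Proof.
transitivity ((1 - p + p) ^+ n); last by rewrite subrK expr1n.
by rewrite exprDn; apply: eq_bigr => k _; rewrite /bern -mulr_natl; ring.
Qed.

Lemma mul_sigma p : 0 < p < 1 -> p * sigma p = sd p.
Proof.
move=> /andP[p0 p1]; rewrite /sigma /sd.
rewrite -{1}(ger0_norm (ltW p0)) -sqrtr_sqr -sqrtrM ?sqr_ge0 //.
by congr Num.sqrt; field; rewrite gt_eqF.
Qed.

Lemma mul_sigma_compl p : 0 < p < 1 -> (1 - p) * sigma (1 - p) = sd p.
Proof.
move=> /andP[p0 p1]; rewrite mul_sigma; last by apply/andP; split; lra.
by rewrite /sd mulrC opprB addrCA subrr addr0.
Qed.

Lemma fLx_sd l x p : 0 < p < 1 ->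
  fLx l x p = x%:R * (sd p * p ^+ x.-1 * (1 - p) ^+ (l - x))
            - (l - x)%:R * (sd p * p ^+ x * (1 - p) ^+ (l - x).-1).
Proof.
move=> p01; rewrite /fLx -{1}(mul_sigma _ p01) -{1}(mul_sigma_compl _ p01).
by case: (l - x)%N => [|k]; case: x => [|x] /=; rewrite ?exprS; ring.
Qed.

Lemma fLx_compl l x p : (x <= l)%N -> fLx l (l - x) (1 - p) = - fLx l x p.
Proof. by move=> xl; rewrite /fLx subKn // opprB addrCA subrr addr0; ring. Qed.

Lemma fLx0 n p : 0 < p < 1 -> fLx n.+1 0 p = - (n.+1%:R * (sd p * bern n 0 p)).
Proof. by move=> p01; rewrite fLx_sd // /bern !subn0 bin0; ring. Qed.

Lemma binomial_fLx n k p : 0 < p < 1 ->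
  'C(n.+1, k.+1)%:R * fLx n.+1 k.+1 p
    = n.+1%:R * (sd p * bern n k p) - n.+1%:R * (sd p * bern n k.+1 p).
Proof.
move=> p01; rewrite fLx_sd // /bern subSS subnS.
have e1 : k.+1%:R * 'C(n.+1, k.+1)%:R = n.+1%:R * 'C(n, k)%:R :> R.
  by rewrite -!natrM -mul_bin_diag.
have e2 : (n - k)%:R * 'C(n.+1, k.+1)%:R = n.+1%:R * 'C(n, k.+1)%:R :> R.
  by rewrite -!natrM (mul_bin_down n.+1 k.+1).
rewrite /= mulrBr !mulrA [_ * k.+1%:R]mulrC [_ * (n - k)%:R]mulrC e1 e2.
ring.
Qed.

End Pointwise.

Arguments sd {R}.
Arguments bern {R}.

Section Expectation.
Variables (R : realType) (P : bias_dist R).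
Implicit Types f g : R -> R.

Lemma eq_Ep f g : {in supp P, f =1 g} -> Ep P f = Ep P g.
Proof. by move=> fg; rewrite /Ep !big_seq; apply: eq_bigr => a /fg ->. Qed.

Lemma EpN f : Ep P (fun p => - f p) = - Ep P f.
Proof. by rewrite /Ep -sumrN; apply: eq_bigr => a _; rewrite mulrN. Qed.

Lemma EpB f g : Ep P (fun p => f p - g p) = Ep P f - Ep P g.
Proof. by rewrite /Ep -sumrB; apply: eq_bigr => a _; rewrite mulrBr. Qed.

Lemma EpZ c f : Ep P (fun p => c * f p) = c * Ep P f.
Proof. by rewrite /Ep mulr_sumr; apply: eq_bigr => a _; rewrite mulrCA. Qed.

Lemma Ep_sum n (F : 'I_n -> R -> R) :
  Ep P (fun p => \sum_(j < n) F j p) = \sum_(j < n) Ep P (F j).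
Proof. by rewrite /Ep exchange_big; apply: eq_bigr => a _; rewrite mulr_sumr. Qed.

Lemma Ep_compl f : Ep P (fun p => f (1 - p)) = Ep P f.
Proof.
have supp_compl : perm_eq [seq 1 - a | a <- supp P] (supp P).
  apply: uniq_perm; last first.
  - move=> a; apply/mapP/idP => [[b /supp_sym b_supp ->] // | a_supp].
    by exists (1 - a); [exact: supp_sym | rewrite opprB addrCA subrr addr0].
  - exact: supp_uniq.
  - by rewrite map_inj_uniq ?supp_uniq // => a b /addrI /oppr_inj.
rewrite /Ep -[in RHS](perm_big _ supp_compl) big_map !big_seq.
by apply: eq_bigr => a /wt_sym ->.
Qed.

Lemma Ep_gt0 f : {in supp P, forall a, 0 < f a} -> 0 < Ep P f.
Proof.
move=> f_gt0; have [a a_supp] : exists a, a \in supp P.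
  case: (supp P) (wt_sum1 P) => [|a s _]; last by exists a; rewrite mem_head.
  by rewrite big_nil => /eqP; rewrite eq_sym oner_eq0.
have term_ge0 b : b \in supp P -> 0 <= wt P b * f b.
  by move=> b_supp; rewrite mulr_ge0 ?ltW ?wt_pos ?f_gt0.
rewrite /Ep big_seq lt0r psumr_neq0 // sumr_ge0 // andbT.
by apply/hasP; exists a; rewrite // a_supp mulr_gt0 ?wt_pos ?f_gt0.
Qed.

Lemma Ep_fLx_compl l x : (x <= l)%N -> Ep P (fLx l (l - x)) = - Ep P (fLx l x).
Proof. by move=> xl; rewrite -[LHS]Ep_compl -EpN; apply: eq_Ep => p _; rewrite fLx_compl. Qed.

End Expectation.

Section Indistinguishable.
Context {R : realType} {P : bias_dist R} {c : nat}.
Hypothesis P_indist : indistinguishable c P.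

Lemma indistinguishable_sum_RLx l : (l <= c)%N ->
  \sum_(1 <= x < l) 'C(l, x)%:R * RLx P l x = 0.
Proof.
move=> lc; case: (ltnP 1 l) => [l_gt1 | l_le1]; last by rewrite big_geq.
by apply: P_indist; rewrite l_gt1 lc.
Qed.

Lemma indistinguishable_Ep_fLx_le0 l x : (l <= c)%N -> (0 < x < l)%N ->
  Ep P (fLx l x) <= 0.
Proof.
move=> lc /andP[x_gt0 xl]; have /eqP := indistinguishable_sum_RLx _ lc.
rewrite big_nat psumr_eq0 => [/allP/(_ x)|y _]; last first.
  by rewrite mulr_ge0 ?ler0n ?le_max ?lexx.
rewrite mem_index_iota x_gt0 xl => /(_ isT) /=.
rewrite mulf_eq0 pnatr_eq0 eqn0Ngt bin_gt0 (ltnW xl) /= /RLx => /eqP <-.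
by rewrite le_max lexx orbT.
Qed.

Lemma indistinguishable_Ep_fLx l x : (l <= c)%N -> (0 < x < l)%N ->
  Ep P (fLx l x) = 0.
Proof.
move=> lc /andP[x_gt0 xl]; apply/eqP; rewrite eq_le.
rewrite indistinguishable_Ep_fLx_le0 ?x_gt0 //= -oppr_le0 -Ep_fLx_compl ?(ltnW xl) //.
apply: indistinguishable_Ep_fLx_le0 => //.
by rewrite subn_gt0 xl ltn_subrL x_gt0 (ltn_trans x_gt0 xl).
Qed.

End Indistinguishable.

Section Bernstein.
Variables (R : realType) (P : bias_dist R) (n : nat).
Hypothesis Ep_fLx_eq0 : forall k, (k < n)%N -> Ep P (fLx n.+1 k.+1) = 0.

Let E_sd_bern k := Ep P (fun p => sd p * bern n k p).

Lemma Ep_sd_bern_const k : (k <= n)%N -> E_sd_bern k = E_sd_bern 0.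
Proof.
elim: k => // k IHk kn; rewrite -IHk ?(ltnW kn) //.
have n1_neq0 : n.+1%:R != 0 :> R by rewrite pnatr_eq0.
apply: (mulfI n1_neq0); apply/eqP; rewrite eq_sym -subr_eq0 /E_sd_bern -!EpZ -EpB.
rewrite -(@eq_Ep _ _ (fun p => 'C(n.+1, k.+1)%:R * fLx n.+1 k.+1 p)).
  by rewrite EpZ Ep_fLx_eq0 ?mulr0.
by move=> p /supp_in01; apply: binomial_fLx.
Qed.

Lemma Ep_neg_fLx0 : Ep P (fun p => - fLx n.+1 0 p) = Ep P sd.
Proof.
have -> : Ep P sd = \sum_(k < n.+1) E_sd_bern k.
  by rewrite -Ep_sum; apply: eq_Ep => p _; rewrite -mulr_sumr sum_bern mulr1.
rewrite (eq_bigr (fun _ => E_sd_bern 0)) => [|k _]; last by rewrite Ep_sd_bern_const // -ltnS.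
rewrite sumr_const card_ord -mulr_natl -EpZ; apply: eq_Ep => p /supp_in01 p01.
by rewrite fLx0 ?opprK.
Qed.

End Bernstein.

Theorem proposition3 (R : realType) (c : nat) (P : bias_dist R) :
  (1 <= c)%N -> indistinguishable c P ->
  forall l : nat, (1 <= l <= c)%N ->
    calR l P = Ep P (fun p => Num.sqrt (p * (1 - p))) /\
    0 < Ep P (fun p => Num.sqrt (p * (1 - p))).
Proof.
move=> _ P_indist [//|n] /andP[_ lc]; split.
  rewrite /calR (indistinguishable_sum_RLx P_indist) // subr0.
  apply: Ep_neg_fLx0 => k kn.
  exact: (indistinguishable_Ep_fLx P_indist n.+1 k.+1 lc kn).
by apply: Ep_gt0 => a /supp_in01 /andP[a_gt0 a_lt1]; rewrite sqrtr_gt0 mulr_gt0 ?subr_gt0.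
Qed.
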